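(* Let $N,M,n$ be integers with $1\le M\le N$ and $1\le n\le N$, and let $X\sim\mathrm{HypGeo}(N;M,n)$. Then $$E\Big(\Big|\log\frac{X}{EX}\Big|\,\mathbb{1}_{\{X>0\}}\Big)\le \frac{4N\log N}{nM}+2\sqrt{\frac{N}{nM}} .$$
   Context: $X\sim\mathrm{HypGeo}(N;M,n)$ means $P(X=k)=\binom{M}{k}\binom{N-M}{n-k}/\binom{N}{n}$ for $k=0,\dots,n$. $\log$ is the natural logarithm and $\mathbb{1}_A$ is the indicator of the event $A$. *)

From Stdlib Require Import Reals Lra Lia.
Open Scope R_scope.

Fixpoint binom (n k : nat) : nat :=
  match n, k with
  | _, O => 1%nat
  | O, S _ => 0%nat
  | S n', S k' => (binom n' k' + binom n' (S k'))%nat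
  end.

Definition hyp_pmf (N M n k : nat) : R :=
  INR (binom M k * binom (N - M) (n - k)) / INR (binom N n).

Definition hyp_E (N M n : nat) (g : nat -> R) : R :=
  sum_f_R0 (fun k => hyp_pmf N M n k * g k) n.

Definition hyp_mean (N M n : nat) : R := hyp_E N M n INR.

(* Write mu = E X = nM/N and d = x - mu.  For x >= mu/2 the logarithm is
   Lipschitz, |ln (x/mu)| <= 2|d|/mu, and AM-GM turns this into
   2|d|/mu <= d^2/mu^(3/2) + 1/sqrt mu.  For 1 <= x < mu/2 one has
   |ln (x/mu)| <= ln mu <= ln N while (2d/mu)^2 >= 1.  Hence on {X > 0} the
   integrand is at most A (X - mu)^2 + 1/sqrt mu with
   A = mu^(-3/2) + 4 ln N / mu^2, and its expectation is at most A Var X + 1/sqrt mu.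
   The factorial moments E X^_j = M^_j n^_j / N^_j (Vandermonde) give
   E X(X-1) <= mu^2, i.e. Var X <= mu, and A mu + 1/sqrt mu is the claimed bound. *)

From Stdlib Require Import Reals Lra Lia.
From mathcomp Require Import all_boot zify.

Set Implicit Arguments.
Unset Strict Implicit.

Open Scope nat_scope.

Lemma binomE n k : binom n k = 'C(n, k).
Proof. by elim: n k => [|n IH] [|k] //=; rewrite binS !IH addnC. Qed.

(* Indexing by k + j rather than k keeps truncated subtraction out of the
   statement, so it holds for all M, k, j. *)
Lemma ffact_mul_bin_shift M k j : (k + j) ^_ j * 'C(M, k + j) = M ^_ j * 'C(M - j, k).
Proof.
elim: j M => [|j IH] [|M]; rewrite ?addn0 ?subn0 ?addnS ?ffact0n ?muln0 //.
rewrite !ffactSS subSS -[in RHS]mulnA -IH mulnAC -mul_bin_diag /=.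
by rewrite mulnAC mulnA.
Qed.

Lemma sum_ffact_mul_bin M L n j : j <= n ->
  \sum_(0 <= k < n.+1) k ^_ j * ('C(M, k) * 'C(L, n - k)) = M ^_ j * 'C(M - j + L, n - j).
Proof.
move=> le_jn; rewrite (big_cat_nat _ (n := j)) //=; last lia.
rewrite big1_seq => [|k]; last by rewrite mem_index_iota => /andP[_ lt_kj]; rewrite ffact_small.
rewrite add0n -{1}(add0n j) big_addn -Vandermonde big_distrr /= big_mkord.
rewrite (_ : n.+1 - j = (n - j).+1); last lia.
apply: eq_bigr => i _; rewrite mulnA ffact_mul_bin_shift -mulnA.
by rewrite (_ : n - (i + j) = n - j - i); last lia.
Qed.

Lemma sum_ffact_mul_bin_ffact M L n j : j <= n ->
  (\sum_(0 <= k < n.+1) k ^_ j * ('C(M, k) * 'C(L, n - k))) * (M + L) ^_ j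
    = M ^_ j * n ^_ j * 'C(M + L, n).
Proof.
move=> le_jn; rewrite sum_ffact_mul_bin //.
have [le_jM|lt_Mj] := leqP j M; last by rewrite ffact_small.
have := ffact_mul_bin_shift (M + L) (n - j) j.
rewrite subnK // (_ : M - j + L = M + L - j); last lia.
by rewrite -!mulnA => ->; rewrite [_ * (M + L) ^_ j]mulnC.
Qed.

Lemma ffact2_mul_le M n N : M <= N -> n <= N ->
  M ^_ 2 * n ^_ 2 * (N * N) <= M * n * (M * n) * N ^_ 2.
Proof.
move=> le_MN le_nN; rewrite !(ffactnS _ 1) !ffactn1.
have core : M.-1 * n.-1 * N <= M * n * N.-1 by nia.
have := leq_mul (leqnn (M * n * N)) core.
nia.
Qed.

Open Scope R_scope.

Lemma ln_le_compat x y : 0 < x -> x <= y -> ln x <= ln y.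
Proof.
move=> x_gt0 /Rle_lt_or_eq_dec [xy|<-]; last exact: Rle_refl.
exact/Rlt_le/ln_increasing.
Qed.

Lemma ln_le_sub1 t : 0 < t -> ln t <= t - 1.
Proof. by move=> t_gt0; have := exp_ineq1_le (ln t); rewrite exp_ln //; lra. Qed.

Lemma ln_div_bounds a b : 0 < a -> a <= b -> 0 <= ln (b / a) <= (b - a) / a.
Proof.
move=> a_gt0 ab; have ba_ge1 : 1 <= b / a.
  by apply: (Rmult_le_reg_r a) => //; rewrite /Rdiv Rmult_assoc Rinv_l; lra.
split; first by rewrite -ln_1; apply: ln_le_compat; lra.
have -> : (b - a) / a = b / a - 1 by field; lra.
by apply: ln_le_sub1; lra.
Qed.

Lemma ln_div_opp x y : 0 < x -> 0 < y -> ln (x / y) = - ln (y / x).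
Proof.
move=> x_gt0 y_gt0; have -> : x / y = / (y / x) by field; lra.
by rewrite ln_Rinv //; apply: Rdiv_lt_0_compat.
Qed.

Lemma Rabs_ln_div_le_near x mu :
  0 < mu -> mu <= 2 * x -> Rabs (ln (x / mu)) <= 2 * Rabs (x - mu) / mu.
Proof.
move=> mu_gt0 mu_le2x; have [mu_le_x|x_lt_mu] := Rle_or_lt mu x.
  have [ln_ge0 ln_le] := ln_div_bounds mu_gt0 mu_le_x.
  by rewrite !Rabs_right; lra.
have [|ln_ge0 ln_le] := ln_div_bounds (a := x) _ (Rlt_le _ _ x_lt_mu); first lra.
rewrite ln_div_opp; try lra.
rewrite Rabs_Ropp Rabs_right ?Rabs_left; try lra.
suff : (mu - x) / x <= 2 * - (x - mu) / mu by lra.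
apply: (Rmult_le_reg_r (x * mu)); first nra.
have -> : (mu - x) / x * (x * mu) = (mu - x) * mu by field; lra.
have -> : 2 * - (x - mu) / mu * (x * mu) = (mu - x) * (2 * x) by field; lra.
apply: Rmult_le_compat_l; lra.
Qed.

Lemma ln_div_le_far x mu c :
  1 <= x -> 2 * x < mu -> mu <= c -> Rabs (ln (x / mu)) <= ln c.
Proof.
move=> x_ge1 far mu_le_c; have x_gt0 : 0 < x by lra.
have [|ln_ge0 _] := ln_div_bounds (b := mu) x_gt0; first lra.
rewrite ln_div_opp ?Rabs_Ropp ?Rabs_right; try lra.
apply: ln_le_compat; first by apply: Rdiv_lt_0_compat; lra.
apply: (Rmult_le_reg_r x); first lra.
rewrite /Rdiv Rmult_assoc Rinv_l; nra.
Qed.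

Lemma Rabs_ln_div_le x mu c : 1 <= x -> 0 < mu -> mu <= c -> 1 <= c ->
  Rabs (ln (x / mu)) <= 2 * Rabs (x - mu) / mu + 4 * ln c * (x - mu) ^ 2 / mu ^ 2.
Proof.
move=> x_ge1 mu_gt0 mu_le_c c_ge1.
have ln_c_ge0 : 0 <= ln c by rewrite -ln_1; apply: ln_le_compat; lra.
have sq_ge0 : 0 <= 4 * ln c * (x - mu) ^ 2 / mu ^ 2.
  apply: Rmult_le_pos; first by have := pow2_ge_0 (x - mu); nra.
  by apply/Rlt_le/Rinv_0_lt_compat/pow_lt.
have lin_ge0 : 0 <= 2 * Rabs (x - mu) / mu.
  apply: Rmult_le_pos; first by have := Rabs_pos (x - mu); lra.
  exact/Rlt_le/Rinv_0_lt_compat.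
have [near|far] := Rle_or_lt mu (2 * x).
  by have := Rabs_ln_div_le_near mu_gt0 near; lra.
have := ln_div_le_far x_ge1 far mu_le_c.
suff : ln c <= 4 * ln c * (x - mu) ^ 2 / mu ^ 2 by lra.
have -> : 4 * ln c * (x - mu) ^ 2 / mu ^ 2 = ln c * (2 * (x - mu) / mu) ^ 2 by field; lra.
have : 1 <= (2 * (x - mu) / mu) ^ 2.
  have -> : 2 * (x - mu) / mu = 2 * x / mu - 2 by field; lra.
  have : 2 * x / mu < 1.
    by apply: (Rmult_lt_reg_r mu) => //; rewrite /Rdiv Rmult_assoc Rinv_l; lra.
  have : 0 < 2 * x / mu by apply: Rdiv_lt_0_compat; lra.
  nra.
nra.
Qed.

Lemma two_Rabs_le d s : 0 < s -> 2 * Rabs d <= d ^ 2 / s + s.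
Proof.
move=> s_gt0; apply: (Rmult_le_reg_r s) => //.
have -> : (d ^ 2 / s + s) * s = Rabs d ^ 2 + s ^ 2 by rewrite pow2_abs; field; lra.
by have := pow2_ge_0 (Rabs d - s); lra.
Qed.

Definition ln_ratio_coeff (mu c : R) : R := / (mu * sqrt mu) + 4 * ln c / mu ^ 2.

Lemma ln_ratio_coeff_ge0 mu c : 0 < mu -> 1 <= c -> 0 <= ln_ratio_coeff mu c.
Proof.
move=> mu_gt0 c_ge1; have ln_c_ge0 : 0 <= ln c by rewrite -ln_1; apply: ln_le_compat; lra.
have : 0 < / (mu * sqrt mu) by apply/Rinv_0_lt_compat/Rmult_lt_0_compat/sqrt_lt_R0.
have : 0 <= 4 * ln c / mu ^ 2.
  by apply: Rmult_le_pos; [lra | apply/Rlt_le/Rinv_0_lt_compat/pow_lt].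
rewrite /ln_ratio_coeff; lra.
Qed.

Lemma Rabs_ln_div_le_quadratic x mu c : 1 <= x -> 0 < mu -> mu <= c -> 1 <= c ->
  Rabs (ln (x / mu)) <= ln_ratio_coeff mu c * (x - mu) ^ 2 + / sqrt mu.
Proof.
move=> x_ge1 mu_gt0 mu_le_c c_ge1.
have := Rabs_ln_div_le x_ge1 mu_gt0 mu_le_c c_ge1.
have := sqrt_lt_R0 _ mu_gt0; have := sqrt_sqrt _ (Rlt_le _ _ mu_gt0).
rewrite /ln_ratio_coeff; move: (sqrt mu) => s ss s_gt0.
have amgm : 2 * Rabs (x - mu) * / mu <= ((x - mu) ^ 2 / s + s) * / mu.
  apply: Rmult_le_compat_r; last exact: two_Rabs_le.
  exact/Rlt_le/Rinv_0_lt_compat.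
have -> : (/ (mu * s) + 4 * ln c / mu ^ 2) * (x - mu) ^ 2 + / s
  = ((x - mu) ^ 2 / s + s) * / mu + 4 * ln c * (x - mu) ^ 2 / mu ^ 2.
  by rewrite -ss; field; lra.
rewrite /Rdiv in amgm *; lra.
Qed.

Lemma ln_ratio_pos_le_quadratic (k : nat) mu c : 0 < mu -> mu <= c -> 1 <= c ->
  (if (0 <? k)%nat then Rabs (ln (INR k / mu)) else 0)
    <= ln_ratio_coeff mu c * (INR k - mu) ^ 2 + / sqrt mu.
Proof.
move=> mu_gt0 mu_le_c c_ge1; case: (Nat.ltb_spec 0 k) => [k_gt0|_].
  by apply: Rabs_ln_div_le_quadratic => //; apply/(le_INR 1).
have := ln_ratio_coeff_ge0 mu_gt0 c_ge1; have := pow2_ge_0 (INR k - mu).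
have := Rinv_0_lt_compat _ (sqrt_lt_R0 _ mu_gt0); nra.
Qed.

Lemma ln_ratio_coeff_at_mean mu c : 0 < mu ->
  ln_ratio_coeff mu c * mu + / sqrt mu = 4 * ln c / mu + 2 * sqrt (/ mu).
Proof.
move=> mu_gt0; rewrite /ln_ratio_coeff sqrt_inv.
have := sqrt_lt_R0 _ mu_gt0; have := sqrt_sqrt _ (Rlt_le _ _ mu_gt0).
move: (sqrt mu) => s ss s_gt0.
by rewrite -ss; field; lra.
Qed.

Lemma sum_f_R0_INR (f : nat -> nat) n :
  sum_f_R0 (fun k => INR (f k)) n = INR (\sum_(0 <= k < n.+1) f k).
Proof.
elim: n => [|n IH]; first by rewrite big_nat1.
by rewrite /= IH [in RHS]big_nat_recr //= plus_INR.
Qed.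

Lemma binom_gt0 N n : (n <= N)%N -> 0 < INR 'C(N, n).
Proof. by move=> le_nN; apply/lt_0_INR/ltP; rewrite bin_gt0. Qed.

Lemma hyp_pmf_ge0 N M n k : 0 <= hyp_pmf N M n k.
Proof.
rewrite /hyp_pmf /Rdiv; apply: Rmult_le_pos; first exact: pos_INR.
have [C_gt0|<-] := Rle_lt_or_eq_dec _ _ (pos_INR (binom N n)); last by rewrite Rinv_0; lra.
exact/Rlt_le/Rinv_0_lt_compat.
Qed.

Lemma hyp_E_ext N M n f g :
  (forall k, (k <= n)%N -> f k = g k) -> hyp_E N M n f = hyp_E N M n g.
Proof. by move=> fg; rewrite /hyp_E; apply: PartSum.sum_eq => k /leP le_kn; rewrite fg. Qed.

Lemma hyp_E_le N M n f g :
  (forall k, f k <= g k) -> hyp_E N M n f <= hyp_E N M n g.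
Proof. by move=> fg; rewrite /hyp_E; apply: sum_Rle => k _; apply/Rmult_le_compat_l/fg/hyp_pmf_ge0. Qed.

Lemma hyp_E_add N M n f g :
  hyp_E N M n (fun k => f k + g k) = hyp_E N M n f + hyp_E N M n g.
Proof. by rewrite /hyp_E -plus_sum; apply: PartSum.sum_eq => k _; ring. Qed.

Lemma hyp_E_scal N M n a f : hyp_E N M n (fun k => a * f k) = a * hyp_E N M n f.
Proof. by rewrite /hyp_E scal_sum; apply: PartSum.sum_eq => k _; ring. Qed.

Lemma hyp_E_INR N M n (g : nat -> nat) : (n <= N)%N ->
  hyp_E N M n (fun k => INR (g k)) * INR 'C(N, n)
    = INR (\sum_(0 <= k < n.+1) g k * ('C(M, k) * 'C(N - M, n - k))).
Proof.
move=> le_nN; have C_gt0 := binom_gt0 le_nN.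
rewrite -sum_f_R0_INR /hyp_E Rmult_comm scal_sum; apply: PartSum.sum_eq => k _.
by rewrite /hyp_pmf !binomE !mult_INR minusE; field; lra.
Qed.

Lemma hyp_E_ffact N M n j : (M <= N)%N -> (n <= N)%N -> (j <= n)%N ->
  hyp_E N M n (fun k => INR (k ^_ j)) * INR (N ^_ j) = INR (M ^_ j * n ^_ j).
Proof.
move=> le_MN le_nN le_jn; have C_gt0 := binom_gt0 le_nN.
apply: (Rmult_eq_reg_r (INR 'C(N, n))); last lra.
rewrite Rmult_assoc (Rmult_comm (INR _)) -Rmult_assoc hyp_E_INR // -!mult_INR !multE.
by have := sum_ffact_mul_bin_ffact M (N - M) le_jn; rewrite subnKC // => ->.
Qed.

Lemma hyp_E_const N M n c : (M <= N)%N -> (n <= N)%N -> hyp_E N M n (fun _ => c) = c.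
Proof.
move=> le_MN le_nN; have := hyp_E_ffact le_MN le_nN (leq0n n).
rewrite !ffactn0 muln1 Rmult_1_r => E1.
by rewrite -[c]Rmult_1_r hyp_E_scal; congr (_ * _); exact: E1.
Qed.

Lemma hyp_mean_mul N M n : (M <= N)%N -> (n <= N)%N -> (0 < n)%N ->
  hyp_mean N M n * INR N = INR M * INR n.
Proof.
move=> le_MN le_nN n_gt0; have := hyp_E_ffact le_MN le_nN n_gt0.
rewrite !ffactn1 mult_INR => <-; congr (_ * _).
by apply: hyp_E_ext => k _; rewrite ffactn1.
Qed.

Lemma hyp_E_ffact2_le N M n : (M <= N)%N -> (n <= N)%N ->
  hyp_E N M n (fun k => INR (k ^_ 2)) <= hyp_mean N M n ^ 2.
Proof.
move=> le_MN le_nN; have [n_le1|n_gt1] := leqP n 1.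
  rewrite (@hyp_E_ext _ _ _ _ (fun _ => 0)) => [|k le_kn]; last by rewrite ffact_small //; lia.
  by rewrite hyp_E_const //; apply: pow2_ge_0.
have E2 := hyp_E_ffact le_MN le_nN n_gt1.
have mean := hyp_mean_mul le_MN le_nN (ltnW n_gt1).
have F_gt0 : 0 < INR (N ^_ 2) by apply/lt_0_INR/ltP; rewrite ffact_gt0; lia.
have N_gt0 : 0 < INR N by apply/lt_0_INR/ltP; lia.
apply: (Rmult_le_reg_r (INR (N ^_ 2) * (INR N * INR N))).
  by apply: Rmult_lt_0_compat => //; apply: Rmult_lt_0_compat.
have -> : hyp_mean N M n ^ 2 * (INR (N ^_ 2) * (INR N * INR N))
  = hyp_mean N M n * INR N * (hyp_mean N M n * INR N) * INR (N ^_ 2) by ring.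
rewrite -Rmult_assoc E2 mean -!mult_INR !multE.
exact/le_INR/leP/ffact2_mul_le.
Qed.

Lemma INR_ffact2 k : INR (k ^_ 2) = INR k * (INR k - 1).
Proof.
case: k => [|k]; first by rewrite ffact0n /=; ring.
by rewrite ffactSS ffactn1 -multE mult_INR S_INR; ring.
Qed.

Lemma hyp_var_le_mean N M n : (M <= N)%N -> (n <= N)%N ->
  hyp_E N M n (fun k => (INR k - hyp_mean N M n) ^ 2) <= hyp_mean N M n.
Proof.
move=> le_MN le_nN; have E2 := hyp_E_ffact2_le le_MN le_nN.
set mu := hyp_mean N M n in E2 *.
rewrite (@hyp_E_ext _ _ _ _ (fun k => INR (k ^_ 2) + ((1 - 2 * mu) * INR k + mu ^ 2)));
  last by move=> k _; rewrite INR_ffact2; ring.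
rewrite !hyp_E_add hyp_E_scal hyp_E_const //.
have -> : hyp_E N M n (fun k => INR k) = mu by [].
lra.
Qed.

Lemma hyp_E_le_quadratic N M n f A B : (M <= N)%N -> (n <= N)%N -> 0 <= A ->
  (forall k, f k <= A * (INR k - hyp_mean N M n) ^ 2 + B) ->
  hyp_E N M n f <= A * hyp_mean N M n + B.
Proof.
move=> le_MN le_nN A_ge0 f_le; apply: (Rle_trans _ _ _ (hyp_E_le N M n f_le)).
rewrite hyp_E_add hyp_E_scal hyp_E_const //.
by apply/Rplus_le_compat_r/Rmult_le_compat_l/hyp_var_le_mean.
Qed.

Lemma hyp_mean_gt0_le N M n : (0 < M)%N -> (M <= N)%N -> (0 < n)%N -> (n <= N)%N ->
  0 < hyp_mean N M n <= INR N.
Proof.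
move=> M_gt0 le_MN n_gt0 le_nN; have := hyp_mean_mul le_MN le_nN n_gt0.
have : 1 <= INR M by apply/(le_INR 1)/leP.
have : 1 <= INR n by apply/(le_INR 1)/leP.
have : INR M <= INR N by apply/le_INR/leP.
have : INR n <= INR N by apply/le_INR/leP.
split; nra.
Qed.

Lemma hyp_mean_inv N M n : (0 < M)%N -> (M <= N)%N -> (0 < n)%N -> (n <= N)%N ->
  / hyp_mean N M n = INR N / (INR n * INR M).
Proof.
move=> M_gt0 le_MN n_gt0 le_nN; have mean := hyp_mean_mul le_MN le_nN n_gt0.
have [mu_gt0 _] := hyp_mean_gt0_le M_gt0 le_MN n_gt0 le_nN.
have INR_n_gt0 : 0 < INR n by apply/lt_0_INR/ltP.
have INR_M_gt0 : 0 < INR M by apply/lt_0_INR/ltP.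
apply: (Rmult_eq_reg_l (hyp_mean N M n)); last lra.
by rewrite Rinv_r; [rewrite /Rdiv -Rmult_assoc mean; field | ]; lra.
Qed.

Theorem lemma5 (N M n : nat) (hM1 : (1 <= M)%coq_nat) (hMN : (M <= N)%coq_nat)
  (hn1 : (1 <= n)%coq_nat) (hnN : (n <= N)%coq_nat) :
  hyp_E N M n (fun k => if (0 <? k)%nat
                        then Rabs (ln (INR k / hyp_mean N M n)) else 0)
  <= 4 * INR N * ln (INR N) / (INR n * INR M)
     + 2 * sqrt (INR N / (INR n * INR M)).
Proof.
move: hM1 hMN hn1 hnN => /leP M_gt0 /leP le_MN /leP n_gt0 /leP le_nN.
have [mu_gt0 mu_le_N] := hyp_mean_gt0_le M_gt0 le_MN n_gt0 le_nN.
have N_ge1 : 1 <= INR N by apply/(le_INR 1)/leP; apply: leq_trans le_MN.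
apply: (Rle_trans _ _ _ (hyp_E_le_quadratic le_MN le_nN (ln_ratio_coeff_ge0 mu_gt0 N_ge1)
  (fun k => ln_ratio_pos_le_quadratic k mu_gt0 mu_le_N N_ge1))).
by rewrite ln_ratio_coeff_at_mean // /Rdiv hyp_mean_inv // /Rdiv; right; ring.
Qed.
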